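(* Let $Y=y[0,\dots,A-1]$ and $Z=z[0,\dots,B-1]$ ($A,B\ge1$) be finite sequences with values in a totally ordered set, each regarded on a linear domain, and let $X=x[0,\dots,A+B-1]$ be the sequence obtained by gluing $Y$ and $Z$, i.e. $x[i]=y[i]$ for $i<A$ and $x[A+j]=z[j]$, with $A-1$ and $A$ made adjacent. Consider the boundary extrema at the glue point: the flat of $Y$ containing $y[A-1]$ and the flat of $Z$ containing $z[0]$. If both are local minima (respectively both are local maxima), then the number of local minima (respectively local maxima) of $X$ equals the number of local minima (respectively local maxima) of $Y$ plus that of $Z$, minus one.
   Context: For a sequence on a linear domain (index $i$ adjacent to $i+1$), a flat is a maximal run of consecutive indices with equal value $l$; its outer neighbours are the (at most two) indices adjacent to the run but not in it. A flat is a local minimum if all its existing outer neighbours have value $>l$, and a local maximum if all its existing outer neighbours have value $<l$. Flats at the ends of the domain (boundary extrema) are classified by their single outer neighbour, and a flat with no outer neighbour (a constant sequence) is counted both as a local minimum and a local maximum. The number of local minima (maxima) is the number of flats that are local minima (maxima). *)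

From mathcomp Require Import all_boot all_order.
Set Implicit Arguments. Unset Strict Implicit. Unset Printing Implicit Defensive.
Import Order.TTheory.
Local Open Scope order_scope.

(* A finite sequence of length n is a function x : nat -> T, of which only the
   values x 0, ..., x (n-1) matter (linear domain: k adjacent to k+1). *)
Section Flats.
Context {d : Order.disp_t} {T : orderType d}.

Definition is_flat (n : nat) (x : nat -> T) (i j : nat) : bool :=
  [&& (i <= j)%N, (j < n)%N,
      [forall k : 'I_n, ((i <= k) && (k <= j))%N ==> (x k == x i)],
      (i == 0%N) || (x i.-1 != x i)
    & (j.+1 == n) || (x j.+1 != x i)].

Definition is_min_flat n (x : nat -> T) i j : bool :=
  [&& is_flat n x i j, (i == 0%N) || (x i < x i.-1)
    & (j.+1 == n) || (x i < x j.+1)].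

Definition is_max_flat n (x : nat -> T) i j : bool :=
  [&& is_flat n x i j, (i == 0%N) || (x i.-1 < x i)
    & (j.+1 == n) || (x j.+1 < x i)].

Definition num_min n (x : nat -> T) : nat :=
  #|[set p : 'I_n * 'I_n | is_min_flat n x p.1 p.2]|.
Definition num_max n (x : nat -> T) : nat :=
  #|[set p : 'I_n * 'I_n | is_max_flat n x p.1 p.2]|.

Definition flat_at_is_min n (x : nat -> T) (k : nat) : Prop :=
  exists i j, [&& (i <= k)%N, (k <= j)%N & is_min_flat n x i j].
Definition flat_at_is_max n (x : nat -> T) (k : nat) : Prop :=
  exists i j, [&& (i <= k)%N, (k <= j)%N & is_max_flat n x i j].

Definition glue (A : nat) (y z : nat -> T) : nat -> T :=
  fun i => if (i < A)%N then y i else z (i - A)%N.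
End Flats.

From mathcomp Require Import all_boot all_order zify.
Set Implicit Arguments. Unset Strict Implicit. Unset Printing Implicit Defensive.
Import Order.TTheory.

(* Split the local minima of a sequence by their position relative to the cut
   between A-1 and A: those ending before A-1, those meeting {A-1, A}, and
   those starting after A.  Being a minimal flat only depends on the flat and
   its two outer neighbours, so away from the cut the glued sequence has exactly
   the minima of y (ending before A-1) and of z (starting after 0).  Distinct
   minimal flats are disjoint and never adjacent, so each of y, z and their
   glue has exactly one minimum meeting the cut: for y and z the hypotheses
   provide it, and for the glue it is y's boundary flat, z's boundary flat, or
   their union, according as y(A-1) is smaller than, larger than, or equal to
   z(0).  Hence the count drops by exactly one. *)

Lemma sum_window (G : nat -> nat) m n N : m + n <= N ->
    (forall i, G i != 0 -> m <= i < m + n) ->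
  \sum_(i < N) G i = \sum_(i < n) G (m + i).
Proof.
move=> le_mnN suppG.
have G0 i : ~~ (m <= i < m + n) -> G i = 0.
  by move=> out; apply/eqP; apply: contraNT out => /suppG.
rewrite -!(big_mkord xpredT) (big_cat_nat (leq0n m) (leq_trans (leq_addr n m) le_mnN)).
rewrite (big_cat_nat (leq_addr n m) le_mnN) /=.
have -> : \sum_(m <= i < m + n) G i = \sum_(i < n) G (m + i).
  rewrite -{1}[m]add0n big_addn addKn big_mkord.
  by apply: eq_bigr => i _; rewrite addnC.
rewrite [\sum_(0 <= i < m) _]big1_seq => [|i /=]; last first.
  by rewrite mem_index_iota => /andP[_ lt_im]; apply: G0; rewrite leqNgt lt_im.
rewrite [\sum_(m + n <= i < N) _]big1_seq ?add0n ?addn0 // => i /=.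
by rewrite mem_index_iota => /andP[le_i _]; apply: G0; rewrite ltnNge le_i andbF.
Qed.

Lemma sum_pairs_window (F : nat -> nat -> nat) m n N : m + n <= N ->
    (forall i j, F i j != 0 -> (m <= i < m + n) && (m <= j < m + n)) ->
  \sum_(i < N) \sum_(j < N) F i j = \sum_(i < n) \sum_(j < n) F (m + i) (m + j).
Proof.
move=> le_mnN suppF.
rewrite (@sum_window (fun i => \sum_(j < N) F i j) _ _ _ le_mnN) => [|i].
  apply: eq_bigr => i _; apply: (@sum_window (F (m + i))) => // j.
  by move/suppF/andP=> [].
rewrite sum_nat_eq0 negb_forall => /existsP[j /=].
by move/suppF/andP=> [].
Qed.

Section MinFlats.
Context {d : Order.disp_t} {T : orderType d}.
Implicit Types (x y : nat -> T).

Lemma is_flatP n x i j :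
  reflect [/\ i <= j, j < n, forall k, i <= k <= j -> x k = x i,
              (i == 0) || (x i.-1 != x i) & (j.+1 == n) || (x j.+1 != x i)]
          (is_flat n x i j).
Proof.
apply: (iffP and5P) => -[le_ij lt_jn cx l r]; split=> //.
  move=> k /andP[le_ik le_kj]; have lt_kn : k < n by apply: leq_ltn_trans lt_jn.
  by move/forallP/(_ (Ordinal lt_kn))/implyP: cx; rewrite le_ik le_kj => /(_ isT)/eqP.
by apply/forallP => k; apply/implyP => /cx ->.
Qed.

Lemma is_min_flatP n x i j :
  reflect [/\ i <= j, j < n, forall k, i <= k <= j -> x k = x i,
              (i == 0) || (x i < x i.-1)%O & (j.+1 == n) || (x i < x j.+1)%O]
          (is_min_flat n x i j).
Proof.
apply: (iffP and3P) => [[/is_flatP[? ? ? _ _] l r] | [? ? cx l r]]; split=> //.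
apply/is_flatP; split=> //.
  by case/orP: l => [-> | /gt_eqF ->]; rewrite ?orbT.
by case/orP: r => [-> | /gt_eqF ->]; rewrite ?orbT.
Qed.

Lemma min_flat_flat n x i j : is_min_flat n x i j -> is_flat n x i j.
Proof. by case/and3P. Qed.

Lemma flat_disjoint_left n x i j i' j' :
  is_flat n x i j -> is_flat n x i' j' -> i < i' -> j < i'.
Proof.
move=> /is_flatP[_ _ cx _ _] /is_flatP[_ _ _ l' _] lt_ii'.
rewrite ltnNge; apply/negP => le_i'j.
have i'_gt0 : i' != 0 by lia.
move: l'; rewrite (negbTE i'_gt0) (cx i') ?(cx i'.-1) ?eqxx //.
all: lia.
Qed.

Lemma flat_disjoint_right n x i j i' j' :
  is_flat n x i j -> is_flat n x i' j' -> j' < j -> j' < i.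
Proof.
move=> /is_flatP[_ lt_jn cx _ _] /is_flatP[le_i'j' _ cx' _ r'] lt_j'j.
rewrite ltnNge; apply/negP => le_ij'.
have xj'1 : x j'.+1 = x i by apply: cx; lia.
have xi' : x i' = x i by rewrite -(cx' j') ?cx //; lia.
by move: r'; rewrite ltn_eqF ?xj'1 ?xi' ?eqxx //; lia.
Qed.

Lemma flat_unique n x i j i' j' k : is_flat n x i j -> is_flat n x i' j' ->
  i <= k <= j -> i' <= k <= j' -> i = i' /\ j = j'.
Proof.
move=> F F' kij kij'; split.
  case: (ltngtP i i') => // lt_i.
    by have := flat_disjoint_left F F' lt_i; lia.
  by have := flat_disjoint_left F' F lt_i; lia.
case: (ltngtP j j') => // lt_j.
  by have := flat_disjoint_right F' F lt_j; lia.
by have := flat_disjoint_right F F' lt_j; lia.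
Qed.

Lemma min_flats_not_adjacent n x i j j' :
  is_min_flat n x i j -> is_min_flat n x j.+1 j' -> False.
Proof.
move=> /is_min_flatP[le_ij _ cx _ r] /is_min_flatP[le_jj' lt_j'n _ l' _].
move: r l'; rewrite ltn_eqF /=; last lia.
by rewrite -(cx j) ?le_ij ?leqnn // => lt1 /(lt_trans lt1); rewrite ltxx.
Qed.

Lemma is_min_flat_prefix n m x y i j :
    (forall k, k <= j.+1 -> x k = y k) -> j.+1 < n -> j.+1 < m ->
  is_min_flat n x i j = is_min_flat m y i j.
Proof.
suff imp n' m' x' y' : (forall k, k <= j.+1 -> x' k = y' k) -> j.+1 < n' ->
    j.+1 < m' -> is_min_flat n' x' i j -> is_min_flat m' y' i j.
  by move=> exy lt_n lt_m; apply/idP/idP; apply: imp => // k /exy.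
move=> exy lt_n lt_m /is_min_flatP[le_ij _ cx l r]; apply/is_min_flatP.
move: r; rewrite (ltn_eqF lt_n) (ltn_eqF lt_m) /= => r.
split=> //; first exact: ltnW.
- by move=> k kij; rewrite -!exy ?cx //; lia.
- by rewrite -!exy //; lia.
- by rewrite -!exy //; lia.
Qed.

Lemma is_min_flat_shift m n x y i j : (forall k, x (m + k) = y k) -> 0 < i ->
  is_min_flat (m + n) x (m + i) (m + j) = is_min_flat n y i j.
Proof.
case: i => // i exy _.
apply/is_min_flatP/is_min_flatP => -[le_ij lt_jn cx l r]; move: cx l r;
  rewrite -[(m + j).+1]addnS eqn_add2l addn_eq0 andbF [in (m + i.+1).-1]addnS /=;
  rewrite !exy => cx l r; split=> //; try lia.
  by move=> k kij; rewrite -exy cx //; lia.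
move=> k kij; have le_mk : m <= k by lia.
by rewrite -(subnKC le_mk) exy cx //; lia.
Qed.

(* [i, j] meets {k.-1, k}; for k = 0 this is {0}. *)
Definition meets_cut (k i j : nat) : bool := (i <= k) && (k.-1 <= j).

Lemma min_flat_meets_cut_unique n x k i j i' j' :
  is_min_flat n x i j -> is_min_flat n x i' j' ->
  meets_cut k i j -> meets_cut k i' j' -> i = i' /\ j = j'.
Proof.
move=> M M' /andP[ik kj] /andP[ik' kj'].
have /is_min_flatP[le_ij _ _ _ _] := M.
have /is_min_flatP[le_ij' _ _ _ _] := M'.
have [F F'] := (min_flat_flat M, min_flat_flat M').
have [both_left|not_left] := boolP ((i <= k.-1) && (i' <= k.-1)).
  by apply: (flat_unique F F' (k := k.-1)); lia.
have [both_right|not_right] := boolP ((k <= j) && (k <= j')).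
  by apply: (flat_unique F F' (k := k)); lia.
exfalso; case: (leqP i k.-1) => ik1.
  have ei' : i' = j.+1 by lia.
  by rewrite ei' in M'; apply: min_flats_not_adjacent M M'.
have ei : i = j'.+1 by lia.
by rewrite ei in M; apply: min_flats_not_adjacent M' M.
Qed.

Definition min_count n x (P : nat -> nat -> bool) : nat :=
  \sum_(i < n) \sum_(j < n) (P i j && is_min_flat n x i j : nat).

Lemma num_min_count n x : num_min n x = min_count n x (fun _ _ => true).
Proof.
rewrite /num_min /min_count pair_bigA -sum1_card big_mkcond /=.
by apply: eq_bigr => p _; rewrite inE.
Qed.

Lemma min_count_widen n N x P : n <= N ->
  min_count n x P = \sum_(i < N) \sum_(j < N) (P i j && is_min_flat n x i j : nat).
Proof.
move=> le_nN.
rewrite (@sum_pairs_window (fun i j => P i j && is_min_flat n x i j : nat) 0 n) // => i j.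
by case: (is_min_flatP n x i j) => [[? ? _ _ _]|_]; rewrite ?andbF //; lia.
Qed.

Lemma min_count_eq0 n x P : (forall i j, i <= j < n -> ~~ P i j) ->
  min_count n x P = 0.
Proof.
move=> notP; apply: big1 => i _; apply: big1 => j _.
case: (is_min_flatP n x i j) => [[le_ij lt_jn _ _ _]|_]; rewrite ?andbF //.
by rewrite (negbTE (notP i j _)) // le_ij lt_jn.
Qed.

Lemma min_count_split n x k :
  min_count n x (fun _ _ => true) =
  min_count n x (fun _ j => j.+1 < k) + min_count n x (meets_cut k)
  + min_count n x (fun i _ => k < i).
Proof.
rewrite /min_count -!big_split; apply: eq_bigr => i _.
rewrite -!big_split; apply: eq_bigr => j _ /=.
case: (is_min_flatP n x i j) => [[le_ij _ _ _ _]|_]; rewrite ?andbF //.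
by rewrite /meets_cut !andbT; lia.
Qed.

Lemma min_count_meets_cut n x k p q : is_min_flat n x p q -> meets_cut k p q ->
  min_count n x (meets_cut k) = 1.
Proof.
move=> Mpq Cpq; have /is_min_flatP[le_pq lt_qn _ _ _] := Mpq.
have lt_pn : p < n by apply: leq_ltn_trans lt_qn.
rewrite /min_count pair_bigA (bigD1 (Ordinal lt_pn, Ordinal lt_qn)) //= Mpq Cpq.
rewrite big1 // => -[i j] /= ne.
case M: is_min_flat; rewrite ?andbF //; case C: meets_cut => //=.
have [ei ej] := min_flat_meets_cut_unique M Mpq C Cpq.
by move: ne; rewrite xpair_eqE -!val_eqE /= ei ej !eqxx.
Qed.

Lemma min_count_flat_at n x k : flat_at_is_min n x k.-1 ->
  min_count n x (meets_cut k) = 1.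
Proof.
case=> i [j /and3P[le_ik le_kj M]]; apply: (min_count_meets_cut M).
by rewrite /meets_cut le_kj (leq_trans le_ik) ?leq_pred.
Qed.

Lemma flat_at_last n x : flat_at_is_min n x n.-1 -> exists a, is_min_flat n x a n.-1.
Proof.
case=> a [a' /and3P[_ le_na' M]]; exists a.
by have /is_min_flatP[_ lt_a'n _ _ _] := M; have -> : n.-1 = a' by lia.
Qed.

Lemma flat_at_first n x : flat_at_is_min n x 0 -> exists b, is_min_flat n x 0 b.
Proof. by case=> i [b /and3P[]]; rewrite leqn0 => /eqP -> _ M; exists b. Qed.

End MinFlats.

Section Glue.
Context {d : Order.disp_t} {T : orderType d}.
Variables (A B : nat) (y z : nat -> T).

Lemma glue_lt k : k < A -> glue A y z k = y k.
Proof. by rewrite /glue => ->. Qed.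

Lemma glue_addn k : glue A y z (A + k) = z k.
Proof. by rewrite /glue ltnNge leq_addr /= addKn. Qed.

Lemma min_count_glue_left :
  min_count (A + B) (glue A y z) (fun _ j => j.+1 < A) =
  min_count A y (fun _ j => j.+1 < A).
Proof.
rewrite (@min_count_widen _ _ A (A + B)) ?leq_addr //.
apply: eq_bigr => i _; apply: eq_bigr => j _.
case: ltnP => //= lt_jA; congr nat_of_bool; apply: is_min_flat_prefix; try lia.
by move=> k le_kj; apply: glue_lt; lia.
Qed.

Lemma min_count_glue_right :
  min_count (A + B) (glue A y z) (fun i _ => A < i) =
  min_count B z (fun i _ => 0 < i).
Proof.
rewrite /min_count (@sum_pairs_window
  (fun i j => (A < i) && is_min_flat (A + B) (glue A y z) i j : nat) A B) // => [|i j].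
  apply: eq_bigr => i _; apply: eq_bigr => j _.
  case: (posnP i) => [-> | i_gt0]; first by rewrite addn0 ltnn.
  by rewrite -[X in X < _]addn0 ltn_add2l i_gt0 (is_min_flat_shift _ _ glue_addn).
case: (is_min_flatP (A + B) (glue A y z) i j) => [[le_ij lt_jn _ _ _]|_]; rewrite ?andbF //.
by case: ltnP => //= *; lia.
Qed.

Lemma glue_min_flat_meets_cut :
  flat_at_is_min A y A.-1 -> flat_at_is_min B z 0 ->
  exists p q, is_min_flat (A + B) (glue A y z) p q && meets_cut A p q.
Proof.
move=> /flat_at_last[a /is_min_flatP[le_aA lt_A1A cy ly _]].
move=> /flat_at_first[b /is_min_flatP[_ lt_bB cz _ rz]].
have xA : glue A y z A = z 0 by have := glue_addn 0; rewrite addn0.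
have xA1 : glue A y z A.-1 = y A.-1 by apply: glue_lt; lia.
have const_y k : a <= k <= A.-1 -> glue A y z k = y A.-1.
  move=> akA; rewrite glue_lt; last lia.
  by rewrite (cy k) // (cy A.-1) // le_aA leqnn.
have const_z k : A <= k <= A + b -> glue A y z k = z 0.
  move=> Akb; have le_Ak : A <= k by lia.
  by rewrite -(subnKC le_Ak) glue_addn cz //; lia.
have left_a : (a == 0) || (glue A y z a < glue A y z a.-1)%O.
  by rewrite !glue_lt //; lia.
have right_b : ((A + b).+1 == A + B) || (z 0 < glue A y z (A + b).+1)%O.
  by rewrite -addnS eqn_add2l glue_addn.
have xa : glue A y z a = y A.-1 by apply: const_y; lia.
case: (ltgtP (y A.-1) (z 0)) => cmp.
- exists a, A.-1; apply/andP; split; last by rewrite /meets_cut; lia.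
  apply/is_min_flatP; split=> //; try lia.
  + by move=> k akA; rewrite xa const_y.
  + by rewrite prednK ?xA ?xa ?cmp ?orbT //; lia.
- exists A, (A + b); apply/andP; split; last by rewrite /meets_cut; lia.
  apply/is_min_flatP; split=> //; try lia.
  + by move=> k Akb; rewrite xA const_z.
  + by rewrite xA xA1 cmp orbT.
  + by rewrite xA.
- exists a, (A + b); apply/andP; split; last by rewrite /meets_cut; lia.
  apply/is_min_flatP; split=> //; try lia.
  + move=> k akb; rewrite xa; case: (ltnP k A) => [lt_kA | le_Ak].
      by apply: const_y; lia.
    by rewrite cmp; apply: const_z; lia.
  + by rewrite xa cmp.
Qed.

Lemma glue_num_min :
  flat_at_is_min A y A.-1 -> flat_at_is_min B z 0 ->
  num_min (A + B) (glue A y z) = num_min A y + num_min B z - 1.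
Proof.
move=> Yflat Zflat; have [p [q /andP[Mpq Cpq]]] := glue_min_flat_meets_cut Yflat Zflat.
rewrite !num_min_count (min_count_split _ _ A) (min_count_split A y A).
rewrite (min_count_split B z 0) min_count_glue_left min_count_glue_right.
rewrite (min_count_meets_cut Mpq Cpq) !min_count_flat_at //.
rewrite (@min_count_eq0 _ _ A y (fun i _ => A < i)) => [|i j]; last lia.
rewrite (@min_count_eq0 _ _ B z (fun _ j => j.+1 < 0)) //; lia.
Qed.

End Glue.

Theorem mainTheorem7 (d : Order.disp_t) (T : orderType d) (A B : nat)
    (y z : nat -> T) :
  (0 < A)%N -> (0 < B)%N ->
  (flat_at_is_min A y A.-1 -> flat_at_is_min B z 0 ->
     num_min (A + B) (glue A y z) = (num_min A y + num_min B z - 1)%N) /\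
  (flat_at_is_max A y A.-1 -> flat_at_is_max B z 0 ->
     num_max (A + B) (glue A y z) = (num_max A y + num_max B z - 1)%N).
Proof.
(* Positivity of A and B already follows from the flat hypotheses; a local
   maximum of x is a local minimum of x read in the dual order. *)
move=> _ _; split; first exact: glue_num_min.
exact: (@glue_num_min _ T^d).
Qed.
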